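(* Let $c_0\neq 0$ and $c_1$ be real constants and consider the Newtonian system in the Euclidean plane $\ddot x=-\partial_x V_1$, $\ddot y=-\partial_y V_1$ with potential $V_1(x,y)=c_0(x^2+9y^2)+c_1y$. Then $$J_1=(x\dot y-y\dot x)\dot x^2-\frac{c_1}{18c_0}\dot x^3+\frac{c_1}{3}x^2\dot x+6c_0x^2y\dot x-\frac{2c_0}{3}x^3\dot y$$ is constant along every solution. *)

From Stdlib Require Import Reals.
From Coquelicot Require Import Coquelicot.
Open Scope R_scope.

Definition V1 (c0 c1 : R) (x y : R) : R := c0 * (x ^ 2 + 9 * y ^ 2) + c1 * y.

Definition dV1_dx (c0 c1 : R) (x y : R) : R := Derive (fun u => V1 c0 c1 u y) x.
Definition dV1_dy (c0 c1 : R) (x y : R) : R := Derive (fun v => V1 c0 c1 x v) y.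

Definition is_solution (c0 c1 : R) (x y vx vy : R -> R) : Prop :=
  forall t : R,
    is_derive x t (vx t) /\ is_derive y t (vy t) /\
    is_derive vx t (- dV1_dx c0 c1 (x t) (y t)) /\
    is_derive vy t (- dV1_dy c0 c1 (x t) (y t)).

Definition J1 (c0 c1 : R) (x y xd yd : R) : R :=
  (x * yd - y * xd) * xd ^ 2 - c1 / (18 * c0) * xd ^ 3 + c1 / 3 * x ^ 2 * xd
  + 6 * c0 * x ^ 2 * y * xd - 2 * c0 / 3 * x ^ 3 * yd.

(** Along a trajectory the accelerations are [x'' = -2 c0 x] and
    [y'' = -(18 c0 y + c1)], so the time derivative of [J1] is a polynomial
    in [x, y, x', y'] that vanishes identically once [c0 <> 0] lets the
    factor [c1 / (18 c0)] cancel; a function with zero derivative on all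
    of [R] is constant. *)

From Stdlib Require Import Reals Lra.
From Coquelicot Require Import Coquelicot.
Open Scope R_scope.

Lemma dV1_dx_eq (c0 c1 x y : R) : dV1_dx c0 c1 x y = 2 * c0 * x.
Proof. apply is_derive_unique; unfold V1; auto_derive; [easy | ring]. Qed.

Lemma dV1_dy_eq (c0 c1 x y : R) : dV1_dy c0 c1 x y = 18 * c0 * y + c1.
Proof. apply is_derive_unique; unfold V1; auto_derive; [easy | ring]. Qed.

Lemma is_derive_0_const (f : R -> R) :
  (forall t, is_derive f t 0) -> forall t1 t2, f t1 = f t2.
Proof.
  intros Hf t1 t2.
  assert (Hb := bounded_variation f (fun _ => 0) 0 t1 t2
                  (fun t _ => conj (Hf t) (Req_le _ _ Rabs_R0))).
  rewrite Rmult_0_l in Hb.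
  apply Rabs_le_between in Hb; lra.
Qed.

(* Fills an evar derivative for a polynomial in curves whose derivatives
   are hypotheses; the result is in Coquelicot's [plus]/[minus]/[zero]. *)
Ltac derive_poly :=
  lazymatch goal with
  | |- is_derive (fun s => @?f s + @?g s) _ _ =>
      apply (is_derive_plus f g); derive_poly
  | |- is_derive (fun s => @?f s - @?g s) _ _ =>
      apply (is_derive_minus f g); derive_poly
  | |- is_derive (fun s => @?f s * @?g s) _ _ =>
      apply (Derive.is_derive_mult f g); derive_poly
  | |- is_derive (fun s => @?f s ^ _) _ _ =>
      apply (is_derive_pow f); derive_poly
  | |- is_derive (fun _ => ?c) _ _ => apply (is_derive_const c)
  | |- _ => eassumption
  end.

Lemma is_derive_J1 (c0 c1 : R) (x y vx vy : R -> R) (t ax ay : R) :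
  is_derive x t (vx t) -> is_derive y t (vy t) ->
  is_derive vx t ax -> is_derive vy t ay ->
  is_derive (fun s => J1 c0 c1 (x s) (y s) (vx s) (vy s)) t
    ((x t * ay - y t * ax) * vx t ^ 2
     + 2 * (x t * vy t - y t * vx t) * vx t * ax
     - c1 / (18 * c0) * 3 * vx t ^ 2 * ax
     + c1 / 3 * (2 * x t * vx t ^ 2 + x t ^ 2 * ax)
     + 6 * c0 * (2 * x t * y t * vx t ^ 2 + x t ^ 2 * vy t * vx t
                 + x t ^ 2 * y t * ax)
     - 2 * c0 / 3 * (3 * x t ^ 2 * vx t * vy t + x t ^ 3 * ay)).
Proof.
  intros Hx Hy Hvx Hvy.
  unfold J1.
  match goal with |- is_derive ?F t _ =>
    evar (d : R); assert (HF : is_derive F t d) by (unfold d; derive_poly)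
  end.
  replace (_ - _) with d; [exact HF |].
  unfold d, minus, plus, opp, zero; simpl; ring.
Qed.

Lemma J1_derivative_vanishes (c0 c1 x y vx vy : R) : c0 <> 0 ->
  let ax := - (2 * c0 * x) in
  let ay := - (18 * c0 * y + c1) in
  (x * ay - y * ax) * vx ^ 2 + 2 * (x * vy - y * vx) * vx * ax
  - c1 / (18 * c0) * 3 * vx ^ 2 * ax
  + c1 / 3 * (2 * x * vx ^ 2 + x ^ 2 * ax)
  + 6 * c0 * (2 * x * y * vx ^ 2 + x ^ 2 * vy * vx + x ^ 2 * y * ax)
  - 2 * c0 / 3 * (3 * x ^ 2 * vx * vy + x ^ 3 * ay) = 0.
Proof. intros hc0 ax ay; unfold ax, ay; field; exact hc0. Qed.

Theorem mainTheorem4 (c0 c1 : R) (hc0 : c0 <> 0) (x y vx vy : R -> R) :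
  is_solution c0 c1 x y vx vy ->
  forall t1 t2 : R,
    J1 c0 c1 (x t1) (y t1) (vx t1) (vy t1) = J1 c0 c1 (x t2) (y t2) (vx t2) (vy t2).
Proof.
  intros Hsol.
  apply (is_derive_0_const (fun t => J1 c0 c1 (x t) (y t) (vx t) (vy t))).
  intros t.
  destruct (Hsol t) as (Hx & Hy & Hvx & Hvy).
  rewrite dV1_dx_eq in Hvx; rewrite dV1_dy_eq in Hvy.
  rewrite <- (J1_derivative_vanishes c0 c1 (x t) (y t) (vx t) (vy t) hc0).
  exact (is_derive_J1 c0 c1 x y vx vy t _ _ Hx Hy Hvx Hvy).
Qed.
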